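(* Let $V$ be a nonempty set (finite or infinite), let $E\subset V\times V$, and let $W\subset V$. For all vertices $b,c\in W^c=V\setminus W$ we have $$\operatorname{cl}_W\big(R_W b\big)\cap \operatorname{cl}_W\big(R_W c\big)=\emptyset \iff \neg\,\big(b\,A_W\,c\big),$$ that is, $b$ and $c$ are t-separated with respect to $W$ if and only if they are d-separated with respect to $W$.
   Context: Relations on $V$: $x\,R\,y$ means $(x,y)\in R$; the composition $RR'$ is defined by $x(RR')y$ iff there is $z\in V$ with $xRz$ and $zR'y$; $R^{-1}$ is the converse ($xR^{-1}y\iff yRx$); $R^0=\Delta$, $R^{n+1}=RR^n$, $R^+=\bigcup_{k\ge1}R^k$, $R^*=\bigcup_{k\ge0}R^k$. For $S\subset V$, $\Delta_S=\{(x,x):x\in S\}$ and $\Delta=\Delta_V$. For $S\subset V$, the foreset is $RS=\{x\in V:\exists s\in S,\ xRs\}$ and the afterset is $SR=\{y\in V:\exists s\in S,\ sRy\}$; for a vertex $c$, $Rc=R\{c\}$. For any relation $F$ on $V$, $\mathcal T_F=\{O\subset V: OF\subset O\}$ is a topology on $V$. Given $W\subset V$ with $W^c=V\setminus W$, define: $E_W=\Delta_{W^c}E$ (so $xE_Wy$ iff $x\in W^c$ and $xEy$); $B_W=E(E_W)^*$ and $B_W^-=(B_W)^{-1}=(E_W^{-1})^*E^{-1}$; $K_W=B_W^-\Delta_{W^c}B_W$ (equivalently $(E_W^{-1})^+(E_W)^+$); $C_W=(\Delta_WK_W\Delta_W)^+\cup\Delta_W$; $A_W=\Delta\cup B_W\cup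 B_W^-\cup K_W\cup(B_W\cup K_W)\,C_W\,(B_W^-\cup K_W^{-1})$; $R_W=\Delta\cup C_W(B_W^-\cup K_W^{-1})$. For $S\subset V$, $\operatorname{cl}_W(S)$ denotes the topological closure of $S$ in the topology $\mathcal T_{E_W}$. Vertices $b,c$ are called t-separated w.r.t. $W$ if $\operatorname{cl}_W(R_Wb)\cap\operatorname{cl}_W(R_Wc)=\emptyset$, and d-separated w.r.t. $W$ if $\neg(b\,A_W\,c)$. *)

From Stdlib Require Import Arith.

Definition relation (V : Type) := V -> V -> Prop.
Definition vset (V : Type) := V -> Prop.

Section Rel.
Context {V : Type}.

Definition rcomp (R R' : relation V) : relation V :=
  fun x y => exists z, R x z /\ R' z y.
Definition rconv (R : relation V) : relation V := fun x y => R y x.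
Definition rdiag : relation V := fun x y => x = y.
Definition rdiagS (S : vset V) : relation V := fun x y => x = y /\ S x.
Definition runion (R R' : relation V) : relation V := fun x y => R x y \/ R' x y.

Fixpoint rpow (R : relation V) (n : nat) : relation V :=
  match n with
  | 0 => rdiag
  | S n => rcomp R (rpow R n)
  end.
Definition rplus (R : relation V) : relation V :=
  fun x y => exists k, 1 <= k /\ rpow R k x y.
Definition rstar (R : relation V) : relation V :=
  fun x y => exists k, rpow R k x y.

Definition scompl (S : vset V) : vset V := fun x => ~ S x.

Definition foreset (R : relation V) (S : vset V) : vset V :=
  fun x => exists s, S s /\ R x s.
Definition afterset (S : vset V) (R : relation V) : vset V :=
  fun y => exists s, S s /\ R s y.
Definition foreset1 (R : relation V) (c : V) : vset V := foreset R (fun x => x = c).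

Definition F_open (F : relation V) (O : vset V) : Prop :=
  forall y, afterset O F y -> O y.
Definition F_closed (F : relation V) (C : vset V) : Prop := F_open F (scompl C).
Definition F_closure (F : relation V) (S : vset V) : vset V :=
  fun x => forall C, F_closed F C -> (forall y, S y -> C y) -> C x.

Section W.
Variables (E : relation V) (W : vset V).

Definition E_W : relation V := rcomp (rdiagS (scompl W)) E.
Definition B_W : relation V := rcomp E (rstar E_W).
Definition Bm_W : relation V := rconv B_W.
Definition K_W : relation V := rcomp (rcomp Bm_W (rdiagS (scompl W))) B_W.
Definition C_W : relation V :=
  runion (rplus (rcomp (rcomp (rdiagS W) K_W) (rdiagS W))) (rdiagS W).
Definition A_W : relation V :=
  runion rdiag (runion B_W (runion Bm_W (runion K_W
    (rcomp (rcomp (runion B_W K_W) C_W) (runion Bm_W (rconv K_W)))))).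
Definition R_W : relation V :=
  runion rdiag (rcomp C_W (runion Bm_W (rconv K_W))).
Definition cl_W (S : vset V) : vset V := F_closure E_W S.

Definition t_separated (b c : V) : Prop :=
  forall x, ~ (cl_W (foreset1 R_W b) x /\ cl_W (foreset1 R_W c) x).
Definition d_separated (b c : V) : Prop := ~ A_W b c.
End W.
End Rel.

(** The closure of a set [S] in the topology of [E_W] is the set of vertices
    from which some point of [S] is reachable along [E_W]-paths, so [b] and
    [c] fail to be t-separated exactly when some [x] reaches both a [y1] with
    [y1 R_W b] and a [y2] with [y2 R_W c].  Two [E_W]-descendants [y1], [y2]
    of a common [x] are equal, linked by [B_W] or [B_W^-1] when one of them
    is [x], and otherwise linked by [K_W] through [x], which lies outside [W]
    since it has an outgoing [E_W]-edge.  Composing this with the definition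
    of [R_W] lands in a summand of [A_W], and conversely every summand of
    [A_W] yields such a common [x]. *)

From Stdlib Require Import Classical Lia.

Section Relations.
Context {V : Type}.
Implicit Types (R : relation V) (S : vset V).

Lemma rstar_refl R x : rstar R x x.
Proof. exists 0. reflexivity. Qed.

Lemma rstar_step R x y z : R x y -> rstar R y z -> rstar R x z.
Proof. intros Hxy [k Hk]. exists (S k). exists y. auto. Qed.

Lemma rstar_cases R x y : rstar R x y -> x = y \/ exists u, R x u /\ rstar R u y.
Proof.
  intros [[|k] Hk].
  - left. exact Hk.
  - right. destruct Hk as [u [Hxu Huy]]. exists u. split; [exact Hxu | exists k; exact Huy].
Qed.

Lemma rstar_ind_l R y (P : V -> Prop) :
  P y -> (forall x u, R x u -> rstar R u y -> P u -> P x) ->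
  forall x, rstar R x y -> P x.
Proof.
  intros Py Pstep x [k Hk]. revert x Hk.
  induction k as [|k IH]; intros x Hk.
  - now rewrite Hk.
  - destruct Hk as [u [Hxu Huy]]. apply (Pstep x u Hxu); [exists k |]; auto.
Qed.

Lemma rstar_trans R x y z : rstar R x y -> rstar R y z -> rstar R x z.
Proof.
  intros Hxy Hyz. revert x Hxy. apply rstar_ind_l; [exact Hyz |].
  intros x u Hxu _ Huz. exact (rstar_step R x u z Hxu Huz).
Qed.

Lemma rstar_snoc R x y z : rstar R x y -> R y z -> rstar R x z.
Proof.
  intros Hxy Hyz. apply (rstar_trans R x y z Hxy).
  exact (rstar_step R y z z Hyz (rstar_refl R z)).
Qed.

Lemma rstar_sym R : (forall x y, R x y -> R y x) ->
  forall x y, rstar R x y -> rstar R y x.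
Proof.
  intros Rsym x y Hxy. revert x Hxy. apply rstar_ind_l; [apply rstar_refl |].
  intros x u Hxu _ Hyu. exact (rstar_snoc R y u x Hyu (Rsym x u Hxu)).
Qed.

Lemma rplus_iff R x y : rplus R x y <-> exists u, R x u /\ rstar R u y.
Proof.
  split.
  - intros [[|k] [Hk Hp]]; [lia |]. destruct Hp as [u [Hxu Huy]].
    exists u. split; [exact Hxu | exists k; exact Huy].
  - intros [u [Hxu [k Huy]]]. exists (S k). split; [lia | exists u; auto].
Qed.

Lemma rplus_trans R x y z : rplus R x y -> rplus R y z -> rplus R x z.
Proof.
  rewrite !rplus_iff. intros [u [Hxu Huy]] [v [Hyv Hvz]].
  exists u. split; [exact Hxu |].
  exact (rstar_trans R u y z Huy (rstar_step R y v z Hyv Hvz)).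
Qed.

Lemma rplus_sym R : (forall x y, R x y -> R y x) ->
  forall x y, rplus R x y -> rplus R y x.
Proof.
  intros Rsym x y. rewrite !rplus_iff. intros [u [Hxu Huy]].
  destruct (rstar_cases R y u (rstar_sym R Rsym u y Huy)) as [<- | [v [Hyv Hvu]]].
  - exists x. split; [exact (Rsym x y Hxu) | apply rstar_refl].
  - exists v. split; [exact Hyv | exact (rstar_snoc R v u x Hvu (Rsym x u Hxu))].
Qed.

Lemma restrict_iff S R x y :
  rcomp (rcomp (rdiagS S) R) (rdiagS S) x y <-> S x /\ R x y /\ S y.
Proof.
  unfold rcomp, rdiagS. split.
  - intros [y' [[x' [[<- Sx] Rxy]] [<- Sy]]]. auto.
  - intros [Sx [Rxy Sy]]. exists y. split; [exists x |]; auto.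
Qed.

(* Closed sets are those closed under [F]-predecessors; since closedness is
   phrased through complements, this needs excluded middle. *)
Lemma F_closure_iff (F : relation V) S x :
  F_closure F S x <-> exists y, rstar F x y /\ S y.
Proof.
  split.
  - intros Hcl. apply Hcl.
    + intros y [s [Hs Hsy]] [z [Hyz Sz]].
      apply Hs. exists z. split; [exact (rstar_step F s y z Hsy Hyz) | exact Sz].
    + intros y Sy. exists y. split; [apply rstar_refl | exact Sy].
  - intros [y [Hxy Sy]] C Cclosed SC. revert x Hxy. apply rstar_ind_l; [auto |].
    intros x u Hxu _ Cu. apply NNPP. intros nCx.
    apply (Cclosed u); [exists x |]; auto.
Qed.

End Relations.

Section Separation.
Context {V : Type} (E : relation V) (W : vset V).

Local Notation EW := (E_W E W).
Local Notation BW := (B_W E W).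
Local Notation KW := (K_W E W).
Local Notation CW := (C_W E W).

Lemma E_W_iff x y : EW x y <-> ~ W x /\ E x y.
Proof.
  unfold E_W, rcomp, rdiagS, scompl. split.
  - intros [z [[<- nWx] Exz]]. auto.
  - intros [nWx Exy]. exists x. auto.
Qed.

Lemma B_W_of_E_W x u y : EW x u -> rstar EW u y -> BW x y.
Proof. intros Hxu Huy. apply E_W_iff in Hxu. exists u. tauto. Qed.

Lemma rstar_E_W_of_B_W x y : ~ W x -> BW x y -> rstar EW x y.
Proof.
  intros nWx [u [Exu Huy]]. apply (rstar_step EW x u y); [apply E_W_iff |]; auto.
Qed.

Lemma K_W_iff x y : KW x y <-> exists z, ~ W z /\ BW z x /\ BW z y.
Proof.
  unfold K_W, Bm_W, rcomp, rconv, rdiagS, scompl. split.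
  - intros [z' [[z [Bzx [<- nWz]]] Bzy]]. exists z. auto.
  - intros [z [nWz [Bzx Bzy]]]. exists z. split; [exists z |]; auto.
Qed.

Lemma K_W_sym x y : KW x y -> KW y x.
Proof. rewrite !K_W_iff. intros [z [nWz [Bzx Bzy]]]. exists z. auto. Qed.

Local Notation KW_in_W := (rcomp (rcomp (rdiagS W) KW) (rdiagS W)).

Lemma KW_in_W_sym x y : KW_in_W x y -> KW_in_W y x.
Proof. rewrite !restrict_iff. intros [Wx [Kxy Wy]]. auto using K_W_sym. Qed.

Lemma C_W_iff x y : CW x y <-> rplus KW_in_W x y \/ (x = y /\ W x).
Proof. reflexivity. Qed.

Lemma C_W_refl x : W x -> CW x x.
Proof. intros Wx. apply C_W_iff. auto. Qed.

Lemma C_W_of_K_W x y : W x -> W y -> KW x y -> CW x y.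
Proof.
  intros Wx Wy Kxy. apply C_W_iff. left. apply rplus_iff.
  exists y. split; [apply restrict_iff; auto | apply rstar_refl].
Qed.

Lemma C_W_sym x y : CW x y -> CW y x.
Proof.
  rewrite !C_W_iff. intros [Hxy | [<- Wx]]; [left | right]; auto.
  exact (rplus_sym _ KW_in_W_sym x y Hxy).
Qed.

Lemma C_W_trans x y z : CW x y -> CW y z -> CW x z.
Proof.
  rewrite !C_W_iff. intros [Hxy | [<- Wx]] [Hyz | [<- Wy]]; auto.
  left. exact (rplus_trans _ x y z Hxy Hyz).
Qed.

Lemma C_W_in_W x y : CW x y -> W x.
Proof.
  rewrite C_W_iff, rplus_iff. intros [[u [Hxu _]] | [_ Wx]]; [| exact Wx].
  apply restrict_iff in Hxu. tauto.
Qed.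

Lemma R_W_iff y b :
  R_W E W y b <-> y = b \/ exists w, CW y w /\ runion BW KW b w.
Proof. reflexivity. Qed.

Lemma A_W_iff b c :
  A_W E W b c <-> b = c \/ BW b c \/ BW c b \/ KW b c \/
    exists u v, runion BW KW b u /\ CW u v /\ runion BW KW c v.
Proof.
  unfold A_W, runion at 1 2 3 4, rcomp at 1 2, rdiag, Bm_W, rconv. split.
  - intros [H | [H | [H | [H | [v [[u [Hbu Huv]] Hcv]]]]]]; auto 6.
    do 4 right. exists u, v. auto.
  - intros [H | [H | [H | [H | [u [v [Hbu [Huv Hcv]]]]]]]]; auto 6.
    do 4 right. exists v. split; [exists u |]; auto.
Qed.

Lemma E_W_descendants_related x y z : rstar EW x y -> rstar EW x z ->
  y = z \/ (BW y z /\ ~ W y) \/ (BW z y /\ ~ W z) \/ KW y z.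
Proof.
  intros Hxy Hxz.
  destruct (rstar_cases _ _ _ Hxy) as [<- | [u [Hxu Huy]]];
    destruct (rstar_cases _ _ _ Hxz) as [<- | [v [Hxv Hvz]]].
  - auto.
  - right; left. split; [exact (B_W_of_E_W x v z Hxv Hvz) | apply E_W_iff in Hxv; tauto].
  - right; right; left.
    split; [exact (B_W_of_E_W x u y Hxu Huy) | apply E_W_iff in Hxu; tauto].
  - do 3 right. apply K_W_iff. exists x.
    split; [apply E_W_iff in Hxu; tauto |].
    split; [exact (B_W_of_E_W x u y Hxu Huy) | exact (B_W_of_E_W x v z Hxv Hvz)].
Qed.

Lemma cl_W_foreset1_iff b x :
  cl_W E W (foreset1 (R_W E W) b) x <-> exists y, rstar EW x y /\ R_W E W y b.
Proof.
  unfold cl_W. rewrite F_closure_iff. unfold foreset1, foreset.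
  split; intros [y [Hxy Hyb]]; exists y; split; auto.
  - destruct Hyb as [s [-> Hys]]. exact Hys.
  - exists b. auto.
Qed.

Lemma R_W_refl b : R_W E W b b.
Proof. apply R_W_iff. auto. Qed.

Lemma common_ancestor_of_A_W b c : ~ W b -> ~ W c -> A_W E W b c ->
  exists x y1 y2, rstar EW x y1 /\ R_W E W y1 b /\ rstar EW x y2 /\ R_W E W y2 c.
Proof.
  intros nWb nWc Hbc.
  apply A_W_iff in Hbc as [<- | [Bbc | [Bcb | [Kbc | [u [v [Hbu [Cuv Hcv]]]]]]]].
  - exists b, b, b. auto using rstar_refl, R_W_refl.
  - exists b, b, c. auto using rstar_refl, R_W_refl, rstar_E_W_of_B_W.
  - exists c, b, c. auto using rstar_refl, R_W_refl, rstar_E_W_of_B_W.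
  - apply K_W_iff in Kbc as [z [nWz [Bzb Bzc]]].
    exists z, b, c. auto using R_W_refl, rstar_E_W_of_B_W.
  - exists u, u, u. split; [apply rstar_refl |]. split.
    + apply R_W_iff. right. exists u. split; [apply C_W_refl, (C_W_in_W u v Cuv) | exact Hbu].
    + split; [apply rstar_refl |]. apply R_W_iff. right. exists v. auto.
Qed.

Lemma A_W_of_common_ancestor b c x y1 y2 : ~ W b -> ~ W c ->
  rstar EW x y1 -> R_W E W y1 b -> rstar EW x y2 -> R_W E W y2 c -> A_W E W b c.
Proof.
  intros nWb nWc Hxy1 Hy1b Hxy2 Hy2c. apply A_W_iff.
  pose proof (E_W_descendants_related x y1 y2 Hxy1 Hxy2) as Hy1y2.
  destruct (proj1 (R_W_iff y1 b) Hy1b) as [<- | [w1 [Cy1w1 Hbw1]]];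
    destruct (proj1 (R_W_iff y2 c) Hy2c) as [<- | [w2 [Cy2w2 Hcw2]]].
  - tauto.
  - pose proof (C_W_in_W _ _ Cy2w2) as Wy2.
    do 4 right. exists y2, w2. unfold runion.
    destruct Hy1y2 as [-> | [[? ?] | [[? ?] | ?]]]; tauto.
  - pose proof (C_W_in_W _ _ Cy1w1) as Wy1.
    do 4 right. exists w1, y1. split; [exact Hbw1 | split; [exact (C_W_sym _ _ Cy1w1) |]].
    unfold runion. destruct Hy1y2 as [-> | [[? ?] | [[? ?] | ?]]]; auto using K_W_sym; tauto.
  - pose proof (C_W_in_W _ _ Cy1w1) as Wy1.
    pose proof (C_W_in_W _ _ Cy2w2) as Wy2.
    do 4 right. exists w1, w2. split; [exact Hbw1 | split; [| exact Hcw2]].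
    apply (C_W_trans w1 y1 w2 (C_W_sym _ _ Cy1w1)).
    destruct Hy1y2 as [<- | [[? ?] | [[? ?] | Ky1y2]]]; try tauto.
    exact (C_W_trans y1 y2 w2 (C_W_of_K_W y1 y2 Wy1 Wy2 Ky1y2) Cy2w2).
Qed.

End Separation.

Theorem theorem1 (V : Type) (Hne : inhabited V) (E : relation V) (W : vset V)
  (b c : V) (Hb : ~ W b) (Hc : ~ W c) :
  (forall x, ~ (cl_W E W (foreset1 (R_W E W) b) x /\ cl_W E W (foreset1 (R_W E W) c) x))
  <-> ~ A_W E W b c.
Proof.
  split.
  - intros Hsep Hbc.
    destruct (common_ancestor_of_A_W E W b c Hb Hc Hbc) as [x [y1 [y2 [Hxy1 [Hy1b [Hxy2 Hy2c]]]]]].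
    apply (Hsep x). rewrite !cl_W_foreset1_iff. split; eauto.
  - intros Hnbc x [Hbx Hcx]. apply Hnbc.
    apply cl_W_foreset1_iff in Hbx as [y1 [Hxy1 Hy1b]].
    apply cl_W_foreset1_iff in Hcx as [y2 [Hxy2 Hy2c]].
    exact (A_W_of_common_ancestor E W b c x y1 y2 Hb Hc Hxy1 Hy1b Hxy2 Hy2c).
Qed.
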